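(* Let $(X,\mathcal{A},\mu)$ be a probability space, $\theta$ a measure-preserving endomorphism of it, $\varphi$ a ceiling function, and $(\overline{X},\overline{\mu},(\Phi_t)_{t\ge 0})$ the special flow with base transformation $\theta$ and ceiling function $\varphi$. Let $\overline{A},\overline{B}\subset\overline{X}$ be holes. Then (each relation being asserted whenever the escape rates appearing in it exist): (1) If $\overline{A}\subset\overline{B}$, then $\rho(\overline{A},\varphi)\le\rho(\overline{B},\varphi)$. (2) For all $r\ge 0$, $\rho(\overline{A},\varphi)=\rho(\Phi_r^{-1}(\overline{A}),\varphi)$. (3) For all $r\ge 0$, $\rho(\overline{A},\varphi)=\rho\big(\bigcup_{\tau\in[0,r]}\Phi_\tau^{-1}(\overline{A}),\varphi\big)$. (4) If $\varphi$ is bounded and $\pi_1(\overline{A})$ is measurable, then $\rho(\pi_1^{-1}(\pi_1(\overline{A})),\varphi)=\rho(\overline{A},\varphi)$.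
   Context: A ceiling function is a measurable $\varphi:X\to\mathbb{R}$ with $\inf_{x\in X}\varphi(x)>0$. Write $S_n\varphi=\sum_{k=0}^{n-1}\varphi\circ\theta^k$ and $N_t^\varphi(x)=\min\{n\in\mathbb{N}_0: S_n\varphi(x)>t\}$ for $t\ge0$. The special flow: $\overline{X}=\{(x,s)\in X\times\mathbb{R}:0\le s<\varphi(x)\}$ with the restriction $\overline{\mu}$ of the product of $\mu$ with Lebesgue measure, and $\Phi_t(x,s)=(x,s+t)$ if $0\le t<\varphi(x)-s$, and $\Phi_t(x,s)=(\theta^{N-1}x,\,s+t-S_{N-1}\varphi(x))$ with $N=N^\varphi_{s+t}(x)$ if $t\ge\varphi(x)-s$. $\pi_1:\overline{X}\to X$ is the projection to the first coordinate. A hole is a measurable $\overline{A}\subset\overline{X}$ with $\bigcup_{t\ge0}\Phi_t^{-1}(\overline{A})=\overline{X}$ up to a $\overline{\mu}$-null set and such that $\bigcup_{t\in[0,\tau]}\Phi_t^{-1}(\overline{A})$ is measurable for every $\tau\ge0$. The upper/lower escape rates are $\limsup_{t\to\infty}$ resp. $\liminf_{t\to\infty}$ of $-\frac1t\log\overline{\mu}(\{(x,s)\in\overline{X}:\forall\tau\in[0,t]:\Phi_\tau(x,s)\notin\overline{A}\})$; if they coincide, the common value is the escape rate $\rho(\overline{A},\varphi)$. *)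

From HB Require Import structures.
From mathcomp Require Import all_boot all_order all_algebra.
From mathcomp Require Import all_classical all_reals all_analysis.
Set Implicit Arguments. Unset Strict Implicit. Unset Printing Implicit Defensive.
Import Order.TTheory GRing.Theory Num.Theory.
Import numFieldNormedType.Exports.
Local Open Scope classical_set_scope.
Local Open Scope ring_scope.

Section SpecialFlow.
Context {R : realType} {d : measure_display} {X : measurableType d}.
Implicit Types (theta : X -> X) (phi : X -> R).

Definition ceiling_function phi : Prop :=
  measurable_fun setT phi /\ 0 < inf (range phi).

Definition measure_preserving (mu : set X -> \bar R) theta : Prop :=
  measurable_fun setT theta /\
  forall A, measurable A -> mu (theta @^-1` A) = mu A.

Definition Ssum theta phi (n : nat) (x : X) : R :=
  \sum_(0 <= k < n) phi (iter k theta x).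

(* N_t^phi(x) = min { n : S_n phi x > t } (0 if no such n; never happens for a ceiling function) *)
Definition Nt theta phi (t : R) (x : X) : nat :=
  match pselect (exists n, t < Ssum theta phi n x) with
  | left h => ex_minn h
  | right _ => 0%N
  end.

Definition Xbar phi : set (X * R) := [set p | 0 <= p.2 < phi p.1].

Definition Phi theta phi (t : R) (p : X * R) : X * R :=
  let x := p.1 in let s := p.2 in
  if t < phi x - s then (x, s + t)
  else let N := Nt theta phi (s + t) x in
       (iter N.-1 theta x, s + t - Ssum theta phi N.-1 x).

Definition flow_preimage theta phi (t : R) (A : set (X * R)) : set (X * R) :=
  Xbar phi `&` (Phi theta phi t @^-1` A).

Definition flow_preimage_upto theta phi (r : R) (A : set (X * R)) :=
  \bigcup_(tau in `[0, r]) flow_preimage theta phi tau A.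

Definition fiber_saturation phi (A : set (X * R)) : set (X * R) :=
  Xbar phi `&` (fst @^-1` (fst @` A)).

Section WithMeasure.
Variable mu : probability X R.

Definition mubar phi (S : set (X * R)) : \bar R :=
  ((product_measure1 mu (@lebesgue_measure R)) (S `&` Xbar phi))%E.

Definition is_hole theta phi (A : set (X * R)) : Prop :=
  [/\ A `<=` Xbar phi, measurable A,
      (product_measure1 mu (@lebesgue_measure R)).-negligible
        (Xbar phi `\` \bigcup_(t in [set t : R | 0 <= t]) flow_preimage theta phi t A)
    & forall tau : R, 0 <= tau -> measurable (flow_preimage_upto theta phi tau A)].

Definition survivor theta phi (A : set (X * R)) (t : R) : set (X * R) :=
  [set p | Xbar phi p /\ forall tau, 0 <= tau <= t -> ~ A (Phi theta phi tau p)].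

Definition elog (x : \bar R) : \bar R :=
  match x with
  | EFin r => if r == 0%R then -oo else (ln r)%:E
  | +oo => +oo
  | -oo => -oo
  end%E.

Definition escape_fun theta phi (A : set (X * R)) (t : R) : \bar R :=
  (- (t^-1)%:E * elog (mubar phi (survivor theta phi A t)))%E.

Definition upper_escape_rate theta phi A : \bar R :=
  limf_esup (escape_fun theta phi A) +oo.
Definition lower_escape_rate theta phi A : \bar R :=
  limf_einf (escape_fun theta phi A) +oo.

Definition escape_rate_exists theta phi A : Prop :=
  upper_escape_rate theta phi A = lower_escape_rate theta phi A.
(* when it exists, the escape rate is the common value *)
Definition escape_rate theta phi A : \bar R := upper_escape_rate theta phi A.

End WithMeasure.
End SpecialFlow.

(* The flow preserves mubar. For 0 <= r < inf phi, Phi_r moves the part of a fibre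
   {x} x [0, phi x) below height phi x - r up by r inside the fibre and the rest into
   the fibre over theta x, so translation invariance of Lebesgue measure and the
   theta-invariance of mu give mubar (Phi_r^-1 A) = mubar A; larger times are reached
   through the flow property. Each claim is then a comparison of survivor sets:
   survivors of a larger hole form a smaller set; survivors of Phi_r^-1 A are the
   Phi_r-preimage of those of A; survivors of the union of Phi_tau^-1 A over
   tau in [0, r] up to time t are those of A up to time t + r; and when phi <= M,
   survivors of A up to time t + 2M lie in the Phi_M-preimage of the survivors of
   pi_1^-1 (pi_1 A) up to time t. Finally, shifting time by a constant a does not
   change limsup -(1/t) log (...), since (t + a) / t -> 1. *)

From HB Require Import structures.
From mathcomp Require Import all_boot all_order all_algebra.
From mathcomp Require Import all_classical all_reals all_analysis.
From mathcomp Require Import lra measurable_realfun.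
Set Implicit Arguments. Unset Strict Implicit. Unset Printing Implicit Defensive.
Import Order.TTheory GRing.Theory Num.Theory.
Import numFieldNormedType.Exports.
Local Open Scope classical_set_scope.
Local Open Scope ring_scope.

Section SpecialFlow.
Context {R : realType} {d : measure_display} {X : measurableType d}.
Variables (theta : X -> X) (phi : X -> R).
Hypothesis phi_ceiling : ceiling_function phi.
Local Notation S := (Ssum theta phi).

Lemma ceiling_inf_gt0 : 0 < inf (range phi).
Proof. exact: phi_ceiling.2. Qed.

Lemma ceiling_ge_inf x : inf (range phi) <= phi x.
Proof.
have [lb|nlb] := pselect (has_lbound (range phi)); first by apply: ge_inf => //; exists x.
by have := ceiling_inf_gt0; rewrite inf_out ?ltxx // => -[].
Qed.

Lemma ceiling_gt0 x : 0 < phi x.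
Proof. exact: lt_le_trans ceiling_inf_gt0 (ceiling_ge_inf x). Qed.

Lemma Ssum0 x : S 0 x = 0.
Proof. by rewrite /Ssum big_geq. Qed.

Lemma SsumS n x : S n.+1 x = S n x + phi (iter n theta x).
Proof. by rewrite /Ssum big_nat_recr. Qed.

Lemma Ssum1 x : S 1 x = phi x.
Proof. by rewrite SsumS Ssum0 add0r. Qed.

Lemma SsumD n m x : S (n + m) x = S n x + S m (iter n theta x).
Proof.
elim: m => [|m IH]; first by rewrite addn0 Ssum0 addr0.
by rewrite addnS !SsumS IH addrA -iterD addnC.
Qed.

Lemma lt_Ssum x : {homo S^~ x : m n / (m < n)%N >-> m < n}.
Proof. by apply: Order.NatMonotonyTheory.homo_ltn_lt => n; rewrite SsumS ltrDl ceiling_gt0. Qed.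

Lemma le_Ssum x : {homo S^~ x : m n / (m <= n)%N >-> m <= n}.
Proof. by move=> m n; rewrite leq_eqVlt => /predU1P[->|/(lt_Ssum x)/ltW]. Qed.

Lemma phi_le_Ssum n x : (0 < n)%N -> phi x <= S n x.
Proof. by rewrite -Ssum1; apply: le_Ssum. Qed.

Lemma Ssum_ge_mul_inf n x : n%:R * inf (range phi) <= S n x.
Proof.
elim: n => [|n IH]; first by rewrite Ssum0 mul0r.
by rewrite SsumS -natr1 mulrDl mul1r lerD // ceiling_ge_inf.
Qed.

Lemma Ssum_bracket u x : 0 <= u -> exists n, S n x <= u < S n.+1 x.
Proof.
move=> u0; have unbounded : exists n, u < S n x.
  exists (Num.truncn (u / inf (range phi))).+1; apply: lt_le_trans (Ssum_ge_mul_inf _ _).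
  by rewrite -ltr_pdivrMr ?ceiling_inf_gt0 // truncnS_gt.
case: (ex_minnP unbounded) => -[|n]; first by rewrite Ssum0 ltNge u0.
move=> ltuS minS; exists n; rewrite ltuS andbT leNgt.
by apply/negP => /minS; rewrite ltnn.
Qed.

Local Notation Phi := (Phi theta phi).

Lemma PhiE t p n : 0 <= p.2 -> 0 <= t -> S n p.1 <= p.2 + t < S n.+1 p.1 ->
  Phi t p = (iter n theta p.1, p.2 + t - S n p.1).
Proof.
case: p => x s /= s0 t0 /andP[leSn ltSn]; rewrite /Phi /=.
case: ifPn => [t_lt|_].
  suff -> : n = 0%N by rewrite Ssum0 subr0.
  case: n leSn {ltSn} => // n leSn; rewrite ltrBrDl in t_lt.
  by have := lt_le_trans (le_lt_trans leSn t_lt) (phi_le_Ssum x (ltn0Sn n)); rewrite ltxx.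
rewrite /Nt; case: pselect => [ex|]; last by case; exists n.+1.
case: ex_minnP => m ltSm minS; suff -> : m = n.+1 by [].
apply/eqP; rewrite eqn_leq minS //= ltnNge; apply/negP => le_mn.
by have := le_lt_trans (le_Ssum x le_mn) (le_lt_trans leSn ltSm); rewrite ltxx.
Qed.

Lemma Phi_bracket t p : 0 <= p.2 -> 0 <= t -> exists n,
  S n p.1 <= p.2 + t < S n.+1 p.1 /\ Phi t p = (iter n theta p.1, p.2 + t - S n p.1).
Proof.
move=> p0 t0; have [n bracket] := Ssum_bracket p.1 (addr_ge0 p0 t0).
by exists n; split => //; exact: PhiE.
Qed.

Lemma Phi_Xbar t p : 0 <= t -> Xbar phi p -> Xbar phi (Phi t p).
Proof.
move=> t0 /andP[p0 _]; have [n [/andP[leSn ltSn] ->]] := Phi_bracket p0 t0.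
by rewrite /Xbar /= subr_ge0 leSn /= ltrBlDl -SsumS.
Qed.

Lemma Phi0 p : Xbar phi p -> Phi 0 p = p.
Proof.
case: p => x s /andP[/= s0 ltsphi].
by rewrite (@PhiE 0 (x, s) 0) //= Ssum0 ?Ssum1 addr0 ?subr0 ?s0.
Qed.

Lemma PhiD a b p : 0 <= a -> 0 <= b -> Xbar phi p ->
  Phi a (Phi b p) = Phi (b + a) p.
Proof.
move=> a0 b0 /andP[p0 _]; have [n [/andP[leSn ltSn] ->]] := Phi_bracket p0 b0.
have q0 : 0 <= (iter n theta p.1, p.2 + b - S n p.1).2 by rewrite /= subr_ge0.
have [m [/andP[leSm ltSm] ->]] := Phi_bracket q0 a0.
rewrite /= in leSm ltSm *.
have bracket : S (n + m) p.1 <= p.2 + (b + a) < S (n + m).+1 p.1.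
  by rewrite -addnS !SsumD; apply/andP; split; lra.
by rewrite (PhiE p0 (addr_ge0 b0 a0) bracket) -iterD addnC SsumD; congr pair; lra.
Qed.

Lemma flow_preimage_Xbar t A : flow_preimage theta phi t A `<=` Xbar phi.
Proof. by move=> p []. Qed.

Lemma flow_preimageD a b A : 0 <= a -> 0 <= b ->
  flow_preimage theta phi (a + b) A =
  flow_preimage theta phi a (flow_preimage theta phi b A).
Proof.
move=> a0 b0; apply/seteqP; split => p [Xp].
  by rewrite /preimage /= -PhiD // => Ap; do !split => //; exact: Phi_Xbar.
by move=> -[_]; rewrite /preimage /= PhiD.
Qed.

Lemma Phi_small r p : 0 <= r -> r < inf (range phi) -> Xbar phi p ->
  Phi r p = if p.2 + r < phi p.1 then (p.1, p.2 + r) else (theta p.1, p.2 + r - phi p.1).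
Proof.
move=> r0 r_small /andP[p0 ltpphi]; case: ifPn => [lt_phi|].
  by rewrite (@PhiE _ _ 0) ?Ssum0 ?subr0 // Ssum1 lt_phi addr_ge0.
rewrite -leNgt => phi_le; rewrite (@PhiE _ _ 1) ?Ssum1 // phi_le (SsumS 1) Ssum1 /=.
by have := ceiling_ge_inf (theta p.1); lra.
Qed.

Local Notation survivor := (survivor theta phi).

Lemma survivorE A t : survivor A t = Xbar phi `\` flow_preimage_upto theta phi t A.
Proof.
apply/seteqP; split => p.
  by move=> [Xp never]; split => // -[tau /= /[!in_itv] /= /never + []].
move=> [Xp not_hit]; split => // tau tau_t Atau; apply: not_hit.
by exists tau; rewrite /= ?in_itv.
Qed.

Lemma le_survivor A t t' : t <= t' -> survivor A t' `<=` survivor A t.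
Proof.
move=> tt' p [Xp never]; split => // tau /andP[tau0 tau_t].
by apply: never; rewrite tau0 (le_trans tau_t tt').
Qed.

Lemma survivorS A B t : A `<=` B -> survivor B t `<=` survivor A t.
Proof. by move=> AB p [Xp never]; split => // tau /never + /AB. Qed.

Lemma survivor_flow_preimage A r t : 0 <= r ->
  survivor (flow_preimage theta phi r A) t = flow_preimage theta phi r (survivor A t).
Proof.
move=> r0; apply/seteqP; split => p [Xp].
  move=> never; do !split => //; first exact: Phi_Xbar.
  move=> tau /andP[tau0 tau_t]; rewrite PhiD // => Atau; apply: (never tau).
    by rewrite tau0.
  by split; [exact: Phi_Xbar|rewrite /preimage /= PhiD // addrC].
move=> [_ never]; split => // tau /andP[tau0 tau_t] [_].
rewrite /preimage /= PhiD // addrC -PhiD //.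
by apply: never; rewrite tau0.
Qed.

Lemma survivor_flow_preimage_upto A r t : 0 <= r -> 0 <= t ->
  survivor (flow_preimage_upto theta phi r A) t = survivor A (t + r).
Proof.
move=> r0 t0; apply/seteqP; split => p [Xp never]; split => // tau /andP[tau0 tau_tr].
  move=> Atau; have [tau_t|t_tau] := leP tau t.
    apply: (never tau); first by rewrite tau0.
    exists 0; first by rewrite /= in_itv /= lexx r0.
    by split; [exact: Phi_Xbar|rewrite /preimage /= Phi0 //; exact: Phi_Xbar].
  apply: (never t); first by rewrite t0 lexx.
  exists (tau - t); first by rewrite /= in_itv /= subr_ge0 (ltW t_tau) lerBlDl.
  split; first exact: Phi_Xbar.
  by rewrite /preimage /= PhiD // ?subr_ge0 ?(ltW t_tau) // addrC subrK.
move=> [sigma /= /[!in_itv] /= /andP[sigma0 sigma_r]] [_].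
rewrite /preimage /= PhiD // => Ahit; apply: (never (tau + sigma)) => //.
by rewrite addr_ge0 //= lerD.
Qed.

Lemma survivor_fiber_saturationE A t : 0 <= t ->
  survivor (fiber_saturation phi A) t = Xbar phi `\` \bigcup_n
    ([set p | S n p.1 - p.2 <= t] `&` [set p | (fst @` A) (iter n theta p.1)]).
Proof.
move=> t0; apply/seteqP; split => p [Xp].
  move=> never; split => // -[n _ [/= hit_t hit]]; have /andP[p0 ltpphi] := Xp.
  case: n hit_t hit => [|n] hit_t hit.
    by apply: (never 0); [rewrite lexx t0|rewrite Phi0].
  have hit0 : 0 <= S n.+1 p.1 - p.2.
    by rewrite subr_ge0 (le_trans (ltW ltpphi)) ?phi_le_Ssum.
  apply: (never (S n.+1 p.1 - p.2)); first by rewrite hit0.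
  have bracket : S n.+1 p.1 <= p.2 + (S n.+1 p.1 - p.2) < S n.+2 p.1.
    by rewrite subrKC lexx lt_Ssum.
  rewrite (PhiE p0 hit0 bracket); split => //.
  by rewrite /Xbar /= subrKC subrr lexx ceiling_gt0.
move=> not_hit; split => // tau /andP[tau0 tau_t] [_ hit]; have /andP[p0 _] := Xp.
have [n [/andP[leSn _] Phi_tau]] := Phi_bracket p0 tau0.
by apply: not_hit; exists n => //; split; [rewrite /=; lra|rewrite Phi_tau in hit].
Qed.

Lemma survivor_fiber_saturation A M t : A `<=` Xbar phi -> (forall x, phi x <= M) ->
  0 <= t -> survivor A (t + 2 * M) `<=`
  flow_preimage theta phi M (survivor (fiber_saturation phi A) t).
Proof.
(* Flowing first for time M >= phi q.1 makes the fibre of A be hit after a return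
   to the base, so the point of A in that fibre is reached at a nonnegative time. *)
move=> AX phiM t0 q [Xq never].
have M0 : 0 <= M by apply: le_trans (phiM q.1); exact/ltW/ceiling_gt0.
have /andP[q0 ltqphi] := Xq.
split => //; split; first exact: Phi_Xbar.
move=> tau /andP[tau0 tau_t] [_ [a Aa]]; rewrite PhiD //.
have [k [/andP[leSk ltSk] ->]] := Phi_bracket q0 (addr_ge0 M0 tau0).
move=> /= a_fibre; have /andP[a0 lta] := AX _ Aa; rewrite a_fibre in lta.
have k_gt0 : (0 < k)%N.
  case: k {leSk a_fibre lta} ltSk => // ltS1; exfalso.
  by rewrite Ssum1 in ltS1; have := phiM q.1; lra.
have Sk := phi_le_Ssum q.1 k_gt0; have Mk := phiM (iter k theta q.1).
have hit_time : 0 <= S k q.1 + a.2 - q.2 <= t + 2 * M by apply/andP; split; lra.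
apply: (never _ hit_time); have /andP[hit0 _] := hit_time.
have bracket : S k q.1 <= q.2 + (S k q.1 + a.2 - q.2) < S k.+1 q.1.
  by rewrite SsumS; apply/andP; split; lra.
rewrite (PhiE q0 hit0 bracket).
have -> : q.2 + (S k q.1 + a.2 - q.2) - S k q.1 = a.2 by lra.
by rewrite -a_fibre -surjective_pairing.
Qed.

End SpecialFlow.

Section UpperLimit.
Context {R : realType}.
Local Open Scope ereal_scope.

Lemma lee_of_forall_gt (x y : \bar R) : (forall z : R, y < z%:E -> x <= z%:E) -> x <= y.
Proof.
case: y => [r| |] x_le; last 2 first.
- by rewrite leey.
- by rewrite (eq_ninfty (fun r => x_le r (ltNyr r))).
by apply/lee_addgt0Pr => e e0; rewrite -EFinD; apply: x_le; rewrite lte_fin ltrDl.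
Qed.

Lemma limf_esup_lt_near (F : set_system R) {F_filter : Filter F} (f : R -> \bar R) (z : R) :
  limf_esup f F < z%:E -> \forall t \near F, f t < z%:E.
Proof.
rewrite limf_esupE => /ereal_inf_lt[_ [V FV <-] supV_lt].
apply: filterS FV => t Vt; apply: le_lt_trans supV_lt.
by apply: ereal_sup_ubound; exists t.
Qed.

Lemma limf_esup_le_of_near (F : set_system R) {F_filter : Filter F} (f : R -> \bar R) (y : \bar R) :
  (forall z : R, y < z%:E -> \forall t \near F, f t <= z%:E) -> limf_esup f F <= y.
Proof.
move=> near_le; apply: lee_of_forall_gt => z /near_le f_le.
apply: le_trans (ereal_inf_lbound _) _; first by exists [set t | f t <= z%:E].
by apply: ge_ereal_sup => _ [t f_le_t <-].
Qed.

Lemma limf_esup_le_near (F : set_system R) {F_filter : Filter F} (f g : R -> \bar R) :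
  (\forall t \near F, f t <= g t) -> limf_esup f F <= limf_esup g F.
Proof.
move=> fg; apply: limf_esup_le_of_near => z /limf_esup_lt_near g_lt.
by apply: filterS2 fg g_lt => t fgt /ltW; exact: le_trans.
Qed.

Lemma limf_esup_eq_near (F : set_system R) {F_filter : Filter F} (f g : R -> \bar R) :
  (\forall t \near F, f t = g t) -> limf_esup f F = limf_esup g F.
Proof.
by move=> fg; apply: le_anti; rewrite !limf_esup_le_near //; apply: filterS fg => t ->.
Qed.

Lemma limf_esup_shift (e : R -> \bar R) (a : R) : (0 <= a)%R ->
  limf_esup (fun t : R => - (t^-1)%:E * e (t + a)%R) +oo%R <=
  limf_esup (fun t : R => - (t^-1)%:E * e t) +oo%R.
Proof.
move=> a0; apply: limf_esup_le_of_near => z L_lt_z.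
have [z' L_lt_z' z'_lt_z] : exists2 z' : R,
    limf_esup (fun t : R => - (t^-1)%:E * e t) +oo%R < z'%:E & (z' < z)%R.
  move: L_lt_z; case: limf_esup => [r| |] //; last by exists (z - 1)%R; rewrite ?ltNyr //; lra.
  by rewrite lte_fin => rz; exists ((r + z) / 2)%R; rewrite ?lte_fin; lra.
have [T [_ Tlt]] := limf_esup_lt_near L_lt_z'.
(* The gap between z' and z absorbs the factor (t + a) / t for large t. *)
near=> t.
have t_gt : (`|z'| * a / (z - z') < t)%R by near: t; apply: nbhs_pinfty_gt; rewrite num_real.
have t0 : (0 < t)%R by apply: le_lt_trans t_gt; rewrite divr_ge0 ?mulr_ge0 //; lra.
have ta0 : (0 < t + a)%R by lra.
have Tt : (T < t)%R by near: t; apply: nbhs_pinfty_gt; rewrite num_real.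
have : - e (t + a)%R < ((t + a) * z')%:E.
  by rewrite EFinM -lte_pdivrMl // muleN -mulNe; apply: Tlt; lra.
rewrite mulNe -muleN lee_pdivrMl // => /ltW /le_trans; apply.
rewrite lee_fin; move: t_gt; rewrite ltr_pdivrMr ?subr_gt0 // => t_gt.
by have := ler_wpM2r a0 (ler_norm z'); nra.
Unshelve. all: by end_near.
Qed.

End UpperLimit.

Section ExtendedLog.
Context {R : realType}.
Local Open Scope ereal_scope.

Lemma le_elog (u v : \bar R) : 0 <= u -> u <= v -> elog u <= elog v.
Proof.
case: u v => [r| |] [s| |] //= u0 uv; last exact: leey.
rewrite !lee_fin in u0 uv; case: ifPn => [_|r_neq0]; first exact: leNye.
have r_gt0 : (0 < r)%R by rewrite lt0r r_neq0.
have s_gt0 : (0 < s)%R := lt_le_trans r_gt0 uv.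
by rewrite gt_eqF // lee_fin ler_ln // posrE.
Qed.

Lemma lee_scaled_elog (t : R) (u v : \bar R) : (0 < t)%R -> 0 <= u -> u <= v ->
  - (t^-1)%:E * elog v <= - (t^-1)%:E * elog u.
Proof.
move=> t0 u0 uv; rewrite !mulNe leeN2 lee_wpmul2l ?le_elog //.
by rewrite lee_fin invr_ge0 ltW.
Qed.

End ExtendedLog.

Section MeasureFacts.
Context {R : realType} {d : measure_display} {T : measurableType d}.
Local Open Scope ereal_scope.

Lemma measurable_ler (f g : T -> R) : measurable_fun setT f -> measurable_fun setT g ->
  measurable [set x | f x <= g x]%R.
Proof.
move=> mf mg; rewrite -[X in measurable X]setTI.
exact: (measurable_fun_ler mf mg) measurableT [set true] _.
Qed.

Lemma measurable_ler_ltr (f g h : T -> R) : measurable_fun setT f ->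
  measurable_fun setT g -> measurable_fun setT h -> measurable [set x | f x <= g x < h x]%R.
Proof.
move=> mf mg mh; rewrite (_ : [set x | _] = [set x | f x <= g x] `&` [set x | g x < h x])%R.
  apply: measurableI; first exact: measurable_ler.
  by rewrite -[X in measurable X]setTI; exact: (measurable_fun_ltr mg mh) measurableT [set true] _.
by apply/seteqP; split => x /=; [case/andP|case=> -> ->].
Qed.

Lemma integral_measure_preserving (mu : {measure set T -> \bar R}) (theta : T -> T)
    (h : T -> \bar R) : measure_preserving mu theta ->
  measurable_fun setT h -> (forall x, 0 <= h x) ->
  \int[mu]_x h (theta x) = \int[mu]_x h x.
Proof.
move=> [mtheta mu_theta] mh h0.
rewrite -[LHS]/(\int[mu]_(x in theta @^-1` setT) (h \o theta) x).
rewrite -ge0_integral_pushforward //; apply: eq_measure_integral => A mA _.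
exact: mu_theta.
Qed.

End MeasureFacts.

Lemma measurable_shift {R : realType} (b : R) (A : set R) : measurable A ->
  measurable ((fun s => s + b) @^-1` A).
Proof.
move=> mA; rewrite -[X in measurable X]setTI.
by apply: measurable_funD => //; exact: measurable_cst.
Qed.

Lemma lebesgue_measure_shift {R : realType} (b : R) (A : set R) : measurable A ->
  lebesgue_measure ((fun s => s + b) @^-1` A) = lebesgue_measure A.
Proof.
have mshift : measurable_fun (setT : set R) (fun s => s + b).
  by apply: measurable_funD => //; exact: measurable_cst.
move=> mA; apply/esym; apply: (@lebesgue_measure_unique R
  (@pushforward _ _ _ (measurableTypeR R) _ lebesgue_measure
     (fun s : measurableTypeR R => s + b))) => // _ [[x1 x2] _ <-].
rewrite [RHS]/= /pushforward (_ : _ @^-1` _ = `](x1 - b), (x2 - b)]%classic); last first.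
  by apply/seteqP; split => s; rewrite /= !in_itv /= ?ltrBlDr ?lerBrDr.
rewrite !lebesgue_measure_itv /= !lte_fin ltrD2r.
by case: ifP => // _; rewrite -!EFinD; congr EFin; lra.
Qed.

Section FlowMeasure.
Context {R : realType} {d : measure_display} {X : measurableType d}.
Variables (mu : probability X R) (theta : X -> X) (phi : X -> R).
Hypothesis theta_mp : measure_preserving mu theta.
Hypothesis phi_ceiling : ceiling_function phi.
Local Notation S := (Ssum theta phi).
Local Notation Phi := (Phi theta phi).
Local Notation flow_preimage := (flow_preimage theta phi).
Local Notation survivor := (survivor theta phi).
Local Notation mubar := (mubar mu phi).

Let mtheta : measurable_fun setT theta := theta_mp.1.
Let mphi : measurable_fun setT phi := phi_ceiling.1.

Lemma measurable_iter n : measurable_fun setT (iter n theta).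
Proof. by elim: n => [|n IH]; [exact: measurable_id|exact: measurableT_comp IH]. Qed.

Lemma measurable_Ssum n : measurable_fun setT (S n).
Proof.
elim: n => [|n IH].
  by rewrite (_ : S 0 = cst 0); [exact: measurable_cst|apply/funext => x; rewrite Ssum0].
rewrite (_ : S n.+1 = S n \+ (phi \o iter n theta)); last by apply/funext => x; rewrite SsumS.
by apply: measurable_funD IH _; exact: measurableT_comp (measurable_iter n).
Qed.

Let measurable_fst_phi : measurable_fun setT (fun p : X * R => phi p.1).
Proof. exact: measurableT_comp mphi measurable_fst. Qed.

Lemma measurable_Xbar : measurable (Xbar phi).
Proof.
apply: (@measurable_ler_ltr _ _ _ (cst 0) snd (fun p => phi p.1)).
- exact: measurable_cst.
- exact: measurable_snd.
- exact: measurable_fst_phi.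
Qed.

Lemma measurable_flow_preimage r A : 0 <= r -> measurable A ->
  measurable (flow_preimage r A).
Proof.
move=> r0 mA; pose jump n (p : X * R) := (iter n theta p.1, p.2 + r - S n p.1).
have mS n : measurable_fun setT (fun p : X * R => S n p.1).
  exact: measurableT_comp (measurable_Ssum n) measurable_fst.
have mr : measurable_fun setT (fun p : X * R => p.2 + r).
  by apply: measurable_funD measurable_snd _; exact: measurable_cst.
have mjump n : measurable_fun setT (jump n).
  apply: measurable_fun_pair; first exact: measurableT_comp (measurable_iter n) measurable_fst.
  exact: measurable_funB.
rewrite (_ : flow_preimage r A = \bigcup_n (Xbar phi `&`
    [set p | S n p.1 <= p.2 + r < S n.+1 p.1] `&` jump n @^-1` A)).
  apply: bigcupT_measurable => n; apply: measurableI.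
    exact: measurableI measurable_Xbar (measurable_ler_ltr _ _ _).
  by rewrite -[X in measurable X]setTI; exact: mjump.
apply/seteqP; split => p.
  move=> [Xp]; have /andP[p0 _] := Xp; rewrite /preimage /=.
  have [n [bracket ->] Ajump] := Phi_bracket theta phi_ceiling p0 r0.
  by exists n => //; do !split.
move=> [n _ [[Xp bracket] Ajump]]; have /andP[p0 _] := Xp.
by split; rewrite // /preimage /= (PhiE phi_ceiling p0 r0 bracket).
Qed.

Section SmallTime.
Variables (r : R) (A : set (X * R)).
Hypotheses (r0 : 0 <= r) (r_small : r < inf (range phi)) (mA : measurable A).

(* Phi_r sends a point of the fibre over x either to A_high, staying in that fibre,
   or to A_low, in the fibre over theta x. *)
Let A_low := A `&` [set p | 0 <= p.2 < r].
Let A_high := A `&` [set p | r <= p.2 < phi p.1].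

Let measurable_A_low : measurable A_low.
Proof.
apply: measurableI mA (@measurable_ler_ltr _ _ _ (cst 0) snd (cst r) _ _ _).
- exact: measurable_cst.
- exact: measurable_snd.
- exact: measurable_cst.
Qed.

Let measurable_A_high : measurable A_high.
Proof.
apply: measurableI mA (@measurable_ler_ltr _ _ _ (cst r) snd (fun p => phi p.1) _ _ _).
- exact: measurable_cst.
- exact: measurable_snd.
- exact: measurable_fst_phi.
Qed.

Lemma xsection_flow_preimage_small x :
  xsection (flow_preimage r A) x =
  (fun s => s + r) @^-1` xsection A_high x `|`
  (fun s => s + (r - phi x)) @^-1` xsection A_low (theta x).
Proof.
have c_le_phi := ceiling_ge_inf phi_ceiling.
rewrite !xsectionE; apply/seteqP; split => s /=.
  move=> [Xxs]; rewrite /preimage /= (Phi_small theta phi_ceiling r0 r_small Xxs) /=.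
  have /andP[/= s0 lt_s] := Xxs; case: ifPn => [lt_sr|ge_sr] Ahit.
    by left; split => //; apply/andP; split => /=; lra.
  rewrite -leNgt in ge_sr; right; rewrite addrA.
  by split => //; apply/andP; split => /=; lra.
have := c_le_phi x => c_le_phix.
move=> [[As /andP[/= r_le lt_phi]]|[As /andP[/= s0 lt_r]]].
  have Xxs : Xbar phi (x, s).
    by rewrite /Xbar /= -(lerD2r r) add0r r_le (le_lt_trans _ lt_phi) ?lerDl.
  by split => //; rewrite /preimage /= (Phi_small theta phi_ceiling r0 r_small Xxs) /= lt_phi.
have Xxs : Xbar phi (x, s) by rewrite /Xbar /=; apply/andP; split; move: r_small; lra.
split => //; rewrite /preimage /= (Phi_small theta phi_ceiling r0 r_small Xxs) /=.
have phi_le : phi x <= s + r by lra.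
by rewrite ltNge phi_le -addrA.
Qed.

Let lebesgue_xsection_flow_preimage x :
  lebesgue_measure (xsection (flow_preimage r A) x) =
  (lebesgue_measure (xsection A_high x) + lebesgue_measure (xsection A_low (theta x)))%E.
Proof.
rewrite xsection_flow_preimage_small measureU;
  try by apply: measurable_shift; exact: measurable_xsection.
  by congr (_ + _)%E; apply: lebesgue_measure_shift; exact: measurable_xsection.
apply/seteqP; split => // s [] /xsectionP [_ /andP[_ /= lt_phi]].
by move=> /xsectionP [_ /andP[/= ge0 _]]; lra.
Qed.

Let lebesgue_xsection_Xbar x :
  lebesgue_measure (xsection (A `&` Xbar phi) x) =
  (lebesgue_measure (xsection A_low x) + lebesgue_measure (xsection A_high x))%E.
Proof.
rewrite -measureU; try exact: measurable_xsection.
  congr lebesgue_measure; rewrite !xsectionE /Xbar; apply/seteqP; split => s /=.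
    move=> [As /andP[s0 lt_s]]; have [lt_r|le_r] := ltP s r.
      by left; split => //; apply/andP.
    by right; split => //; apply/andP.
  have := ceiling_ge_inf phi_ceiling x; move: r_small r0 => r_c r_ge0 c_phi.
  by move=> [] [As /andP[/= lo hi]]; split => //; apply/andP; split; lra.
apply/seteqP; split => // s [] /xsectionP [_ /andP[_ /= lt_r]].
by move=> /xsectionP [_ /andP[/= r_le _]]; lra.
Qed.

Lemma mubar_flow_preimage_small : mubar (flow_preimage r A) = mubar A.
Proof.
have mlow := measurable_fun_xsection lebesgue_measure measurable_A_low.
have mhigh := measurable_fun_xsection lebesgue_measure measurable_A_high.
rewrite /mubar setIidl; last exact: flow_preimage_Xbar.
rewrite /product_measure1 /=.
transitivity (\int[mu]_x (lebesgue_measure (xsection A_high x) +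
                         lebesgue_measure (xsection A_low (theta x))))%E.
  by apply: eq_integral => x _; exact: lebesgue_xsection_flow_preimage.
rewrite ge0_integralD //; last exact: measurableT_comp mlow mtheta.
rewrite (integral_measure_preserving theta_mp mlow) // addeC -ge0_integralD //.
by apply: eq_integral => x _; rewrite lebesgue_xsection_Xbar.
Qed.

End SmallTime.

Lemma mubar_flow_preimage r A : 0 <= r -> measurable A ->
  mubar (flow_preimage r A) = mubar A.
Proof.
move=> r0 mA; have c0 := ceiling_inf_gt0 phi_ceiling.
(* Flow in n steps of length r / n < inf phi. *)
pose n := (Num.truncn (r / inf (range phi))).+1.
have n0 : 0 < n%:R :> R by rewrite ltr0n.
have step_small : r / n%:R < inf (range phi).
  by rewrite ltr_pdivrMr // mulrC -ltr_pdivrMr // truncnS_gt.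
have step0 : 0 <= r / n%:R by rewrite divr_ge0 // ltW.
suff : forall k, mubar (flow_preimage (k%:R * (r / n%:R)) A) = mubar A.
  by move/(_ n); rewrite mulrCA divff ?mulr1 // gt_eqF.
elim => [|k IH]; first by rewrite mul0r mubar_flow_preimage_small // lexx.
have k_step0 : 0 <= k%:R * (r / n%:R) by rewrite mulr_ge0.
have -> : k.+1%:R * (r / n%:R) = r / n%:R + k%:R * (r / n%:R).
  by rewrite -natr1 mulrDl mul1r addrC.
rewrite (flow_preimageD theta phi_ceiling A step0 k_step0).
by rewrite (mubar_flow_preimage_small step0 step_small (measurable_flow_preimage k_step0 mA)).
Qed.

Lemma measurable_survivor A t : is_hole mu theta phi A -> 0 <= t ->
  measurable (survivor A t).
Proof.
move=> [_ _ _ mupto] t0; rewrite survivorE.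
exact: measurableD measurable_Xbar (mupto t t0).
Qed.

Lemma measurable_survivor_fiber_saturation A t : measurable (fst @` A) -> 0 <= t ->
  measurable (survivor (fiber_saturation phi A) t).
Proof.
move=> mA t0; rewrite survivor_fiber_saturationE //.
apply: measurableD measurable_Xbar _; apply: bigcupT_measurable => n.
have miter_fst : measurable_fun setT (fun p : X * R => iter n theta p.1).
  exact: measurableT_comp (measurable_iter n) measurable_fst.
apply: measurableI; last by rewrite -[X in measurable X]setTI; exact: miter_fst.
apply: (@measurable_ler _ _ _ _ (cst t)); last exact: measurable_cst.
by apply: measurable_funB measurable_snd; exact: measurableT_comp (measurable_Ssum n) _.
Qed.

Lemma mubar_ge0 E : (0 <= mubar E)%E.
Proof. exact: measure_ge0. Qed.

Lemma le_mubar E1 E2 : E1 `<=` E2 -> measurable E1 -> measurable E2 ->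
  (mubar E1 <= mubar E2)%E.
Proof.
move=> E12 mE1 mE2; apply: le_measure; rewrite ?inE; try exact: measurableI measurable_Xbar.
exact: setSI.
Qed.

Local Open Scope ereal_scope.
Local Notation escape_rate := (escape_rate mu theta phi).

Let pinfty_gt0 : \forall t \near +oo%R, (0 < t :> R)%R.
Proof. exact: nbhs_pinfty_gt (num_real 0). Qed.

Lemma le_escape_rate A B : is_hole mu theta phi A -> is_hole mu theta phi B ->
  A `<=` B -> escape_rate A <= escape_rate B.
Proof.
move=> HA HB AB; apply: limf_esup_le_near; apply: filterS pinfty_gt0 => t t0.
apply: (lee_scaled_elog t0 (mubar_ge0 _)).
by apply: le_mubar; [exact: survivorS|exact: measurable_survivor (ltW t0)..].
Qed.

Lemma escape_rate_flow_preimage A r : is_hole mu theta phi A -> (0 <= r)%R ->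
  escape_rate (flow_preimage r A) = escape_rate A.
Proof.
move=> HA r0; apply: limf_esup_eq_near; apply: filterS pinfty_gt0 => t t0.
rewrite /escape_fun (survivor_flow_preimage theta phi_ceiling A t r0).
by rewrite (mubar_flow_preimage r0 (measurable_survivor HA (ltW t0))).
Qed.

Lemma escape_rate_flow_preimage_upto A r : is_hole mu theta phi A -> (0 <= r)%R ->
  escape_rate (flow_preimage_upto theta phi r A) = escape_rate A.
Proof.
move=> HA r0; apply: le_anti; apply/andP; split.
  apply: le_trans (limf_esup_shift (fun s => elog (mubar (survivor A s))) r0).
  apply: limf_esup_le_near; apply: filterS pinfty_gt0 => t t0.
  by rewrite /escape_fun (survivor_flow_preimage_upto theta phi_ceiling A r0 (ltW t0)).
apply: limf_esup_le_near; apply: filterS pinfty_gt0 => t t0.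
rewrite /escape_fun (survivor_flow_preimage_upto theta phi_ceiling A r0 (ltW t0)).
apply: (lee_scaled_elog t0 (mubar_ge0 _)); apply: le_mubar.
- by apply: le_survivor; rewrite lerDl.
- exact: measurable_survivor (addr_ge0 (ltW t0) r0).
- exact: measurable_survivor (ltW t0).
Qed.

Lemma escape_rate_fiber_saturation A M : is_hole mu theta phi A ->
  (forall x, phi x <= M)%R -> measurable (fst @` A) ->
  escape_rate (fiber_saturation phi A) = escape_rate A.
Proof.
move=> HA phiM mA; have AX : A `<=` Xbar phi by case: HA.
have M0 : (0 <= M)%R by apply: le_trans (phiM point); exact/ltW/ceiling_gt0.
have M20 : (0 <= 2 * M)%R by rewrite mulr_ge0.
apply: le_anti; apply/andP; split.
  apply: le_trans (limf_esup_shift (fun s => elog (mubar (survivor A s))) M20).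
  apply: limf_esup_le_near; apply: filterS pinfty_gt0 => t t0.
  have msat := measurable_survivor_fiber_saturation mA (ltW t0).
  apply: (lee_scaled_elog t0 (mubar_ge0 _)).
  rewrite -(mubar_flow_preimage M0 msat).
  apply: le_mubar.
  - exact: survivor_fiber_saturation AX phiM (ltW t0).
  - exact: measurable_survivor (addr_ge0 (ltW t0) M20).
  - exact: measurable_flow_preimage.
apply: limf_esup_le_near; apply: filterS pinfty_gt0 => t t0.
apply: (lee_scaled_elog t0 (mubar_ge0 _)); apply: le_mubar.
- by apply: survivorS => p Ap; split; [exact: AX|exists p].
- exact: measurable_survivor_fiber_saturation (ltW t0).
- exact: measurable_survivor (ltW t0).
Qed.

End FlowMeasure.

Theorem proposition3p5 (R : realType) (d : measure_display) (X : measurableType d)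
  (mu : probability X R) (theta : X -> X) (phi : X -> R)
  (Htheta : measure_preserving mu theta) (Hphi : ceiling_function phi)
  (A B : set (X * R))
  (HA : is_hole mu theta phi A) (HB : is_hole mu theta phi B) :
  [/\ (A `<=` B ->
        escape_rate_exists mu theta phi A -> escape_rate_exists mu theta phi B ->
        (escape_rate mu theta phi A <= escape_rate mu theta phi B)%E),
      (forall r : R, 0 <= r ->
        escape_rate_exists mu theta phi A ->
        escape_rate_exists mu theta phi (flow_preimage theta phi r A) ->
        escape_rate mu theta phi A = escape_rate mu theta phi (flow_preimage theta phi r A)),
      (forall r : R, 0 <= r ->
        escape_rate_exists mu theta phi A ->
        escape_rate_exists mu theta phi (flow_preimage_upto theta phi r A) ->
        escape_rate mu theta phi A = escape_rate mu theta phi (flow_preimage_upto theta phi r A))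
    & ((exists M : R, forall x, phi x <= M) -> measurable (fst @` A) ->
        escape_rate_exists mu theta phi (fiber_saturation phi A) ->
        escape_rate_exists mu theta phi A ->
        escape_rate mu theta phi (fiber_saturation phi A) = escape_rate mu theta phi A)].
Proof.
split.
- by move=> AB _ _; exact: le_escape_rate.
- by move=> r r0 _ _; rewrite escape_rate_flow_preimage.
- by move=> r r0 _ _; rewrite escape_rate_flow_preimage_upto.
- by move=> [M phiM] mA _ _; exact: escape_rate_fiber_saturation phiM mA.
Qed.
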